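(* Let $L$ be an atomic $0$-distributive lattice with at least three atoms. Then the metric dimension $\dim_M(G^c(L))$ is finite if and only if $G^c(L)$ is finite.
   Context: A lattice $L$ with $0$ is $0$-distributive if $a\wedge b=0$ and $a\wedge c=0$ imply $a\wedge(b\vee c)=0$; it is atomic if every nonzero element lies above an atom. $Z^*(L)=\{a\in L\setminus\{0\}:\ a\wedge b=0\text{ for some } b\neq 0\}$. $G^c(L)$ is the graph with vertex set $Z^*(L)$, distinct $a,b$ adjacent iff $a\wedge b\neq 0$ (under these hypotheses it is connected). For a connected graph $G$ and $S=\{v_1,\dots,v_k\}\subseteq V(G)$, the representation of $v$ is $D(v\mid S)=(d(v,v_1),\dots,d(v,v_k))$; $S$ is resolving if $D(u\mid S)=D(v\mid S)$ for $u,v\in V(G)\setminus S$ implies $u=v$; $\dim_M(G)$ is the minimum cardinality of a resolving set. *)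

From HB Require Import structures.
From mathcomp Require Import all_boot all_order.
Set Implicit Arguments. Unset Strict Implicit. Unset Printing Implicit Defensive.
Import Order.Theory.
Local Open Scope order_scope.

Section ZeroDivGraph.
Context {disp : Order.disp_t} {L : bLatticeType disp}.

Definition zero_distributive : Prop :=
  forall a b c : L, a `&` b = \bot -> a `&` c = \bot -> a `&` (b `|` c) = \bot.

Definition atom (a : L) : Prop :=
  a <> \bot /\ forall x : L, \bot < x -> x <= a -> x = a.

Definition atomic : Prop :=
  forall x : L, x <> \bot -> exists a, atom a /\ a <= x.

Definition Zstar (a : L) : Prop :=
  a <> \bot /\ exists b : L, b <> \bot /\ a `&` b = \bot.

Definition gadj (a b : L) : Prop :=
  Zstar a /\ Zstar b /\ a <> b /\ a `&` b <> \bot.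

Fixpoint reach (n : nat) (u v : L) : Prop :=
  match n with
  | 0 => u = v
  | n'.+1 => u = v \/ exists w, gadj u w /\ reach n' w v
  end.

Definition gdist (u v : L) (n : nat) : Prop :=
  reach n u v /\ forall m, (m < n)%N -> ~ reach m u v.

Definition same_repr (S : seq L) (u v : L) : Prop :=
  forall s, s \in S -> forall n, gdist u s n <-> gdist v s n.

Definition resolving (S : seq L) : Prop :=
  (forall s, s \in S -> Zstar s) /\
  forall u v, Zstar u -> Zstar v -> u \notin S -> v \notin S ->
    same_repr S u v -> u = v.

(* dim_M(G^c(L)) is finite: some finite resolving set exists *)
Definition finite_metric_dim : Prop := exists S : seq L, resolving S.

(* G^c(L) is finite: its vertex set Z*(L) is finite *)
Definition finite_graph : Prop :=
  exists s : seq L, forall x, Zstar x -> x \in s.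

End ZeroDivGraph.

(** If Z*(L) is finite, Z*(L) itself resolves G^c(L). Conversely,
    take a finite resolving set S. Any two vertices u, v are joined by the walk
    u - p - (p ∨ p') - p' - v through atoms p <= u and p' <= v, where p ∨ p' is a
    zero-divisor because it meets a third atom trivially (0-distributivity).
    So the diameter is at most 4, every vertex outside S has its distance vector
    to S in the finite set {0,...,4}^|S|, and since S resolves, distinct
    vertices outside S have distinct vectors: Z*(L) is finite. *)

From mathcomp Require Import all_boot all_order.
From mathcomp Require Import boolp.
Import Order.Theory.
Set Implicit Arguments. Unset Strict Implicit.

Lemma finite_of_injective_code (T V : eqType) (code : T -> V -> Prop)
    (R : seq V) (P : T -> Prop) :
  (forall x, P x -> exists2 r, r \in R & code x r) ->
  (forall x y r, P x -> P y -> code x r -> code y r -> x = y) ->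
  exists s : seq T, forall x, P x -> x \in s.
Proof.
move=> coded code_inj.
suff [s covers] : exists s : seq T,
    forall x r, P x -> r \in R -> code x r -> x \in s.
  by exists s => x Px; have [r] := coded x Px; apply: covers.
elim: R {coded} => [|r R [s covers]]; first by exists [::].
have [[x [Px cx]]|no_x] := pselect (exists x, P x /\ code x r).
- exists (x :: s) => y r' Py; rewrite !inE => /orP[/eqP-> cy|r'R cy].
    by rewrite (code_inj y x r) ?eqxx.
  by rewrite (covers y r') ?orbT.
- exists s => y r' Py; rewrite inE => /orP[/eqP-> cy|]; last exact: covers.
  by case: no_x; exists y.
Qed.

Fixpoint bounded_seqs (D k : nat) : seq (seq nat) :=
  if k is k'.+1 then [seq i :: r | i <- iota 0 D.+1, r <- bounded_seqs D k']
  else [:: [::]].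

Lemma mem_bounded_seqs D r :
  all (fun i => i <= D) r -> r \in bounded_seqs D (size r).
Proof.
elim: r => [|i r IH] // /andP[leiD /IH rD].
apply/allpairsP.
by exists (i, r); rewrite mem_iota add0n ltnS leiD.
Qed.

Section ZeroDivisorGraph.
Variables (disp : Order.disp_t) (L : bLatticeType disp).
Implicit Types (a b c d p q u v w x y : L) (S : seq L).

Lemma reach_S n u v : reach n u v -> reach n.+1 u v.
Proof.
elim: n u => [|n IH] u /=; first by left.
by case=> [->|[w [uw wv]]]; [left | right; exists w; split; last apply: IH].
Qed.

Lemma reach_leq m n u v : m <= n -> reach m u v -> reach n u v.
Proof.
move=> /subnK <-; elim: (n - m) => [|k IH] // muv.
by rewrite addSn; apply/reach_S/IH.
Qed.

Lemma reach_trans m n u w v : reach m u w -> reach n w v -> reach (m + n) u v.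
Proof.
elim: m u => [|m IH] u; first by move=> /= ->.
case=> [->|[w' [uw' w'w]]] wv; first exact: reach_leq (leq_addl _ _) wv.
by rewrite addSn; right; exists w'; split; last exact: IH.
Qed.

Lemma gdist_uniq u v m n : gdist u v m -> gdist u v n -> m = n.
Proof.
move=> [rm minm] [rn minn].
by case: (ltngtP m n) => // [/minn | /minm].
Qed.

Lemma gdist_exists D u v : reach D u v -> exists2 n, n <= D & gdist u v n.
Proof.
elim/ltn_ind: D => D IH rD.
have [[m ltmD rm]|shortest] := pselect (exists2 m, m < D & reach m u v).
  have [n lenm dn] := IH m ltmD rm.
  by exists n; first exact: leq_trans lenm (ltnW ltmD).
by exists D => //; split => // m ltmD rm; apply: shortest; exists m.
Qed.

Lemma reach1_comparable x y :
  Zstar x -> Zstar y -> (x >=< y)%O -> reach 1 x y.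
Proof.
move=> zx zy cmp /=; have [->|nxy] := eqVneq x y; first by left.
right; exists y; split=> //; do 3!split=> //; first exact/eqP.
by case/orP: cmp => [/meet_idPl|/meet_idPr] ->; [case: zx | case: zy].
Qed.

Lemma atom_meet_eq0 p q : atom p -> atom q -> p <> q -> (p `&` q = \bot)%O.
Proof.
move=> [_ min_p] [_ min_q] npq; apply/eqP; apply/negPn/negP; rewrite -lt0x => pq0.
by apply: npq; rewrite -(min_p _ pq0 (leIl _ _)) (min_q _ pq0 (leIr _ _)).
Qed.

Lemma Zstar_distinct_atoms p q : atom p -> atom q -> p <> q -> Zstar p.
Proof.
move=> ap aq npq; split; first by case: ap.
by exists q; split; [case: aq | exact: atom_meet_eq0].
Qed.

Lemma exists_atom_avoiding a b c p q :
  atom a -> atom b -> atom c -> a <> b -> a <> c -> b <> c ->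
  exists d, [/\ atom d, d <> p & d <> q].
Proof.
move=> aa ab ac nab nac nbc.
have : ~~ all (mem [:: p; q]) [:: a; b; c].
  have uniq_abc : uniq [:: a; b; c].
    by rewrite /= !inE !negb_or; do !(apply/andP; split); apply/eqP.
  by apply/negP => /allP/(uniq_leq_size uniq_abc).
case/allPn => d; rewrite !inE /= !negb_or => abcd /andP[/eqP ndp /eqP ndq].
by exists d; split => //; case/or3P: abcd => /eqP->.
Qed.

Definition dist_vector S u (r : seq nat) : Prop :=
  size r = size S /\ forall i, i < size S -> gdist u (nth \bot%O S i) (nth 0 r i).

Lemma exists_dist_vector D S u : (forall s, s \in S -> reach D u s) ->
  exists2 r, all (fun i => i <= D) r & dist_vector S u r.
Proof.
elim: S => [|s S IH] reach_uS; first by exists [::].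
have [r rD [size_r dist_r]] :=
  IH (fun t tS => reach_uS t (mem_behead (s := s :: S) tS)).
have [n lenD dn] := gdist_exists (reach_uS s (mem_head s S)).
by exists (n :: r); [rewrite /= lenD | split; [rewrite /= size_r | case]].
Qed.

Lemma same_repr_dist_vector S u v r :
  dist_vector S u r -> dist_vector S v r -> same_repr S u v.
Proof.
move=> [_ du] [_ dv] s sS n.
have sSi : index s S < size S by rewrite index_mem.
have := du _ sSi; have := dv _ sSi; rewrite nth_index // => dvs dus.
by split=> dn; [rewrite (gdist_uniq dn dus) | rewrite (gdist_uniq dn dvs)].
Qed.

Lemma finite_graph_of_resolving D S :
  (forall u v, Zstar u -> Zstar v -> reach D u v) -> resolving S ->
  finite_graph (L := L).
Proof.
move=> diam [SZ S_resolves].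
have [s covers] : exists s : seq L, forall x, Zstar x /\ x \notin S -> x \in s.
  apply: (finite_of_injective_code (code := dist_vector S)
            (R := bounded_seqs D (size S)) (P := fun x => Zstar x /\ x \notin S)).
    move=> u [zu _].
    have [r rD dr] := exists_dist_vector (fun s sS => diam u s zu (SZ s sS)).
    by exists r => //; case: dr => <- _; apply: mem_bounded_seqs.
  move=> u v r [zu uS] [zv vS] du dv.
  exact: S_resolves (same_repr_dist_vector du dv).
exists (S ++ s) => x zx; rewrite mem_cat.
by case: (boolP (x \in S)) => //= xS; apply: covers.
Qed.

Lemma resolving_Zstar_filter s :
  (forall x, Zstar x -> x \in s) -> resolving [seq x <- s | `[< Zstar (L := L) x >]].
Proof.
move=> covers; split=> [x|u v zu _ uS].
  by rewrite mem_filter => /andP[/asboolP].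
by rewrite mem_filter covers // andbT in uS; case/asboolP: uS.
Qed.

Hypotheses (zd : zero_distributive (L := L)) (at_L : atomic (L := L)).
Hypothesis three_atoms :
  exists a b c : L, atom a /\ atom b /\ atom c /\ a <> b /\ a <> c /\ b <> c.

Lemma exists_atom_other p q : exists d, [/\ atom d, d <> p & d <> q].
Proof.
have [a [b [c [aa [ab [ac [nab [nac nbc]]]]]]]] := three_atoms.
exact: exists_atom_avoiding aa ab ac nab nac nbc.
Qed.

Lemma Zstar_atom p : atom p -> Zstar p.
Proof.
move=> ap; have [d [ad ndp _]] := exists_atom_other p p.
by apply: Zstar_distinct_atoms ap ad _ => /esym.
Qed.

Lemma Zstar_join_atoms p q : atom p -> atom q -> Zstar (p `|` q)%O.
Proof.
move=> ap aq; have [d [ad ndp ndq]] := exists_atom_other p q.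
split.
  by move=> pq0; case: ap => + _; apply; apply/eqP; rewrite -lex0 -pq0 leUl.
exists d; split; first by case: ad.
by rewrite meetC; apply: zd; apply: atom_meet_eq0.
Qed.

Lemma diameter_le4 u v : Zstar u -> Zstar v -> reach 4 u v.
Proof.
move=> zu zv.
have [p [ap lepu]] := at_L (proj1 zu).
have [q [aq leqv]] := at_L (proj1 zv).
have zp := Zstar_atom ap; have zq := Zstar_atom aq.
have zpq := Zstar_join_atoms ap aq.
rewrite -[4]/(1 + (1 + (1 + 1))).
apply: (reach_trans (w := p)).
  exact: reach1_comparable zu zp (ge_comparable lepu).
apply: (reach_trans (w := (p `|` q)%O)).
  exact: reach1_comparable zp zpq (le_comparable (leUl p q)).
apply: (reach_trans (w := q)).
  exact: reach1_comparable zpq zq (ge_comparable (leUr q p)).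
exact: reach1_comparable zq zv (le_comparable leqv).
Qed.

End ZeroDivisorGraph.

Theorem lemma3p2 (disp : Order.disp_t) (L : bLatticeType disp) :
  @zero_distributive disp L -> @atomic disp L ->
  (exists a b c : L, atom a /\ atom b /\ atom c /\ a <> b /\ a <> c /\ b <> c) ->
  (@finite_metric_dim disp L <-> @finite_graph disp L).
Proof.
move=> zd at_L three_atoms; split=> [[S] | [s covers]].
  exact: finite_graph_of_resolving (diameter_le4 zd at_L three_atoms).
by exists [seq x <- s | `[< Zstar x >]]; apply: resolving_Zstar_filter.
Qed.
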